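(* For all $Q\in(0,1)$, $z>0$ and $y\in(0,1]$, $$\sum_{m\in\mathbb{Z}} Q^{\frac{m(m+1)}{2}}z^m=Z(Q,z,y)\prod_{i=1}^\infty\frac{1-Q^i}{1+(y-1)Q^i},$$ where $$Z(Q,z,y) = 1 + \sum_{\substack{L,R\geq0\\ L+R>0}}y^{L+R} \sum_{\substack{\ell_1,\dots,\ell_L\geq 1 \\ m_1,\dots,m_{R}\geq 1}}\prod_{j=1}^{L} \frac{Q^{\frac12 \ell_j(\ell_j-1)+j\ell_j+\ell_{j-1}(\ell_j+\cdots+\ell_{L})}z^{-\ell_j}}{1-Q^{\ell_j+\cdots + \ell_{L}}}\prod_{j=1}^{R}\frac{Q^{\frac12 m_j(m_j-1)+jm_j+m_{j-1}(m_{j}+\cdots+m_{R})}z^{m_j}}{1-Q^{m_{j}+\cdots+m_{R}}}\Big(\big(1-y^{-1}\big)Q^{\ell_1+\cdots + \ell_L}Q^{m_{1}+\cdots+m_{R}} + y^{-1}\Big),$$ with the conventions $\ell_0=-1$ and $m_0=0$.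
   Context: In the sum defining $Z(Q,z,y)$, $L$ and $R$ range over nonnegative integers with $L+R>0$, and for given $L,R$ the inner sum ranges over all tuples of positive integers $(\ell_1,\dots,\ell_L)$ and $(m_1,\dots,m_R)$; an empty product equals $1$ (so e.g. when $L=0$ the first product is $1$ and $\ell_1+\cdots+\ell_L=0$). *)

From HB Require Import structures.
From mathcomp Require Import all_boot all_order all_algebra.
From mathcomp Require Import all_classical all_reals all_analysis.
Set Implicit Arguments. Unset Strict Implicit. Unset Printing Implicit Defensive.
Import Order.TTheory GRing.Theory Num.Theory.
Import numFieldNormedType.Exports.
Local Open Scope classical_set_scope.
Local Open Scope ring_scope.

(* One of the two products in Z(Q,z,y).  [l] is the tuple (l_1,...,l_L)
   stored 0-based (l_{j+1} = nth 0 l j), [c0] is the convention for l_0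
   (-1 for the left product, 0 for the right one), [sgn] is the sign of the
   exponent of z (false: z^{-l_j}, true: z^{l_j}). *)
Definition side_prod (R : realType) (c0 : int) (sgn : bool) (Q z : R)
    (l : seq nat) : R :=
  \prod_(j < size l)
    (let lj := nth 0%N l j in
     let tailsum := sumn (drop j l) in
     let prev : int := if j == 0%N :> nat then c0 else (nth 0%N l j.-1)%:Z in
     let e : int := ((lj * (lj - 1)) %/ 2)%N%:Z + (j.+1 * lj)%N%:Z
                     + prev * tailsum%:Z in
     Q ^ e * z ^ (if sgn then lj%:Z else - lj%:Z) / (1 - Q ^+ tailsum)).

Definition Zindex : set (seq nat * seq nat) :=
  [set p | all (fun x => 0 < x)%N p.1 && all (fun x => 0 < x)%N p.2
           && (0 < size p.1 + size p.2)%N].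

Definition Zterm (R : realType) (Q z y : R) (p : seq nat * seq nat) : R :=
  y ^+ (size p.1 + size p.2) * side_prod (-1) false Q z p.1
    * side_prod 0 true Q z p.2
    * ((1 - y^-1) * Q ^+ sumn p.1 * Q ^+ sumn p.2 + y^-1).

(* Z(Q,z,y); all terms are nonnegative, so the (unordered) sum is taken in
   the extended reals. *)
Definition Zfun (R : realType) (Q z y : R) : \bar R :=
  (1%:E + \esum_(p in Zindex) (Zterm Q z y p)%:E)%E.

Definition theta_lhs (R : realType) (Q z : R) : \bar R :=
  \esum_(m in [set: int]) (Q ^ ((m * (m + 1)) %/ 2)%Z * z ^ m)%:E.

Definition prod_partial (R : realType) (Q y : R) (n : nat) : R :=
  \prod_(1 <= i < n.+1) ((1 - Q ^+ i) / (1 + (y - 1) * Q ^+ i)).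

From HB Require Import structures.
From mathcomp Require Import all_boot all_order all_algebra.
From mathcomp Require Import all_classical all_reals all_analysis.
From mathcomp Require Import ring lra zify.
Import Order.TTheory GRing.Theory Num.Theory.
Import numFieldNormedType.Exports.
Local Open Scope classical_set_scope.
Local Open Scope ring_scope.
Set Implicit Arguments. Unset Strict Implicit. Unset Printing Implicit Defensive.

(* Each side product in a term of Z telescopes to Q^(c0 a + C(a,2)) z^(+-a)
   times a product over the tail sums of its composition alone, where a is the
   total of the composition and c0 is l_0 or m_0.  Summed over all compositions
   of a, these weighted tail products give y Q^a/(1-Q^a) P_(a-1), where
   P_n = prod_(i<=n) (1+(y-1)Q^i)/(1-Q^i); hence Z = sum_(a,b) theta_(b-a) w(a,b)
   with theta_n = Q^(n(n+1)/2) z^n.  Along each diagonal b - a = n the sum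
   sum_k w(k, k+|n|) does not depend on n, because its terms telescope, and it
   lies between P_|n| and P_|n| + O(Q^|n|).  So it is T = lim P_n, and
   sum_n theta_n = Z / T = Z prod_i (1-Q^i)/(1+(y-1)Q^i). *)

Lemma bin2_div2 n : ((n * (n - 1)) %/ 2 = 'C(n, 2))%N.
Proof. by rewrite bin2 -divn2 subn1. Qed.

Lemma bin2D a b : 'C(a + b, 2) = ('C(a, 2) + 'C(b, 2) + a * b)%N.
Proof.
elim: b => [|b IHb]; first by rewrite addn0 bin0n muln0 !addn0.
by rewrite addnS binS bin1 IHb binS bin1; lia.
Qed.

Lemma bin2_subz (a b : nat) :
  (((b%:Z - a%:Z) * (b%:Z - a%:Z + 1)) %/ 2)%Z
    = 'C(a, 2)%:Z + 'C(b, 2)%:Z + b%:Z - (a * b)%:Z.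
Proof.
have bin2_mul2 n : ('C(n, 2) * 2 = n * n.-1)%N by rewrite mulnC -mul_bin_diag bin1.
have := bin2_mul2 a; have := bin2_mul2 b => Hb Ha.
rewrite -[RHS](@mulzK _ 2) //; congr (divz _ _); nia.
Qed.

Definition signed (b : bool) (n : nat) : int := if b then n%:Z else - n%:Z.

Lemma signedD b m n : signed b (m + n) = signed b m + signed b n.
Proof. by case: b; rewrite /signed PoszD // opprD. Qed.

Section SideProductClosedForm.
Variables (R : realType) (Q z : R).
Hypotheses (Q_neq0 : Q != 0) (z_neq0 : z != 0).

Fixpoint tail_prod (l : seq nat) : R :=
  if l is x :: l' then Q ^+ (x + sumn l') / (1 - Q ^+ (x + sumn l')) * tail_prod l'
  else 1.

Lemma side_prod_cons c0 sgn x l :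
  side_prod c0 sgn Q z (x :: l) =
  Q ^ ('C(x, 2)%:Z + x%:Z + c0 * (x + sumn l)%N%:Z) * z ^ signed sgn x
    / (1 - Q ^+ (x + sumn l)) * (side_prod x%:Z sgn Q z l * Q ^+ sumn l).
Proof.
rewrite /side_prod /= big_ord_recl /= mul1n bin2_div2; congr (_ * _).
have -> : sumn l = (\sum_(j < size l) nth 0%N l j)%N.
  by elim: l {c0} => [|a l IHl]; rewrite ?big_ord0 // /= big_ord_recl /= IHl.
rewrite -prodrXr -big_split /=; apply: eq_bigr => j _.
rewrite /bump /= add1n.
have expS k n (a c : int) :
    Q ^ (a + (k.+1 * n)%N%:Z + c) = Q ^ (a + (k * n)%N%:Z + c) * Q ^+ n.
  by rewrite exprnP -expfzDr //; congr (Q ^ _); rewrite mulSn PoszD; ring.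
by case: j => [[|j] Hj]; rewrite /= add0n expS; ring.
Qed.

Lemma side_prod_closed c0 sgn l :
  side_prod c0 sgn Q z l =
  Q ^ (c0 * (sumn l)%:Z + 'C(sumn l, 2)%:Z) * z ^ signed sgn (sumn l) * tail_prod l.
Proof.
elim: l c0 => [|x l IHl] c0.
  rewrite /side_prod big_ord0 /= mulr0 add0r expr0z /signed.
  by case: sgn; rewrite ?oppr0 expr0z !mulr1.
rewrite side_prod_cons IHl /= signedD (expfzDr _ _ z_neq0).
have expE : Q ^ (c0 * (x + sumn l)%N%:Z + 'C(x + sumn l, 2)%:Z) * Q ^+ (x + sumn l)
    = Q ^ ('C(x, 2)%:Z + x%:Z + c0 * (x + sumn l)%N%:Z)
      * Q ^ (x%:Z * (sumn l)%:Z + 'C(sumn l, 2)%:Z) * Q ^+ sumn l.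
  by rewrite !exprnP -!expfzDr //; congr (Q ^ _); rewrite bin2D; lia.
move: expE; set A := Q ^ _; set B := Q ^ _; set C := Q ^ _ => expE.
transitivity (A * Q ^+ (x + sumn l) * z ^ signed sgn x * z ^ signed sgn (sumn l)
  / (1 - Q ^+ (x + sumn l)) * tail_prod l); last by ring.
by rewrite expE; ring.
Qed.

End SideProductClosedForm.

Lemma esumZl (R : realType) (T : choiceType) (S : set T) (f : T -> \bar R) (r : R) :
  0 <= r -> (forall t, (0 <= f t)%E) ->
  \esum_(i in S) (r%:E * f i)%E = (r%:E * \esum_(i in S) f i)%E.
Proof.
move=> r_ge0 f_ge0; rewrite /esum -ereal_supZl //; last first.
  by apply/set0P; exists (\sum_(x \in set0) f x)%E; exists set0 => //; exact: fsets_set0.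
rewrite image_comp; congr ereal_sup; apply: eq_imagel => A _ /=.
by rewrite ge0_mule_fsumr.
Qed.

Definition all_pos (l : seq nat) : bool := all (fun x => 0 < x)%N l.
Arguments all_pos : simpl never.

Lemma all_pos_cons x l : all_pos (x :: l) = (0 < x)%N && all_pos l.
Proof. by []. Qed.

Lemma all_pos_sumn0 l : all_pos l -> sumn l = 0%N -> l = [::].
Proof. by case: l => [|x l] //; rewrite all_pos_cons /= => /andP[]; lia. Qed.

Definition compositions (b : nat) : set (seq nat) := [set l | all_pos l && (sumn l == b)].
Definition compositions_le (b : nat) : set (seq nat) :=
  [set l | all_pos l && (sumn l <= b)%N].

Lemma compositions0 : compositions 0 = [set [::]].
Proof.
apply/seteqP; split => [l /andP[l_pos /eqP l0]|_ ->] //=.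
exact: all_pos_sumn0.
Qed.

Lemma compositions_le0 : compositions_le 0 = [set [::]].
Proof.
apply/seteqP; split => [l /andP[l_pos l0]|_ ->] //=.
by apply: all_pos_sumn0; lia.
Qed.

Lemma compositionsS b :
  compositions b.+1 = (fun l => (b.+1 - sumn l)%N :: l) @` compositions_le b.
Proof.
rewrite /compositions /compositions_le.
apply/seteqP; split => [[|x l] //=|_ [l /andP[l_pos l_le] <-] /=].
  rewrite all_pos_cons => /andP[/andP[x_gt0 l_pos] /eqP sum_xl].
  by exists l; rewrite /= ?l_pos; [lia | congr (_ :: _); lia].
by rewrite all_pos_cons l_pos /=; apply/andP; split; lia.
Qed.

Lemma compositions_leSI b : compositions_le b.+1 `&` compositions_le b = compositions_le b.
Proof.
rewrite /compositions_le.
apply/seteqP; split => l /=; first by case.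
by move=> /andP[l_pos l_le]; split => //; rewrite l_pos /=; lia.
Qed.

Lemma compositions_leSD b : compositions_le b.+1 `&` ~` compositions_le b = compositions b.+1.
Proof.
rewrite /compositions /compositions_le.
apply/seteqP; split => l /=.
  by move=> [/andP[l_pos l_le] /negP]; rewrite l_pos /= => l_gt; apply/eqP; lia.
by move=> /andP[l_pos /eqP l_eq]; rewrite l_pos /=; split; lia.
Qed.

Section GeometricFactors.
Variables (R : realType) (Q : R).
Hypotheses (Q_gt0 : 0 < Q) (Q_lt1 : Q < 1).

Lemma subr1X_gt0 n : 0 < 1 - Q ^+ n.+1.
Proof. by rewrite subr_gt0 exprn_ilt1 // ltW. Qed.

Lemma subr1X_neq0 n : 1 - Q ^+ n.+1 != 0.
Proof. by rewrite gt_eqF // subr1X_gt0. Qed.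

Lemma subr1X_ge0 n : 0 <= 1 - Q ^+ n.
Proof. by rewrite subr_ge0 exprn_ile1 // ltW. Qed.

Lemma tail_prod_ge0 l : 0 <= tail_prod Q l.
Proof.
elim: l => [|x l IHl] //=.
by rewrite mulr_ge0 // divr_ge0 ?subr1X_ge0 // exprn_ge0 // ltW.
Qed.

End GeometricFactors.

Section CompositionSum.
Variables (R : realType) (Q y : R).

Definition comp_weight (l : seq nat) : R := y ^+ size l * tail_prod Q l.
Definition qratio (p : nat) : R := (1 + (y - 1) * Q ^+ p) / (1 - Q ^+ p).
Definition qprod (n : nat) : R := \prod_(1 <= p < n.+1) qratio p.
Definition comp_sum (b : nat) : R :=
  if b is b'.+1 then y * Q ^+ b / (1 - Q ^+ b) * qprod b' else 1.

Lemma qprod0 : qprod 0 = 1.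
Proof. by rewrite /qprod big_geq. Qed.

Lemma qprodS n : qprod n.+1 = qprod n * qratio n.+1.
Proof. by rewrite /qprod big_nat_recr. Qed.

Hypotheses (Q_gt0 : 0 < Q) (Q_lt1 : Q < 1) (y_ge0 : 0 <= y).

Lemma qratio_num_ge0 p : 0 <= 1 + (y - 1) * Q ^+ p.
Proof.
have -> : 1 + (y - 1) * Q ^+ p = (1 - Q ^+ p) + y * Q ^+ p by ring.
by rewrite addr_ge0 ?subr1X_ge0 ?mulr_ge0 ?exprn_ge0 ?(ltW Q_gt0).
Qed.

Lemma qratio_ge0 p : 0 <= qratio p.
Proof. by rewrite divr_ge0 ?qratio_num_ge0 ?subr1X_ge0. Qed.

Lemma qprod_ge0 n : 0 <= qprod n.
Proof. by rewrite prodr_ge0 // => p _; exact: qratio_ge0. Qed.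

Lemma comp_sum_ge0 b : 0 <= comp_sum b.
Proof.
case: b => [|b] //=.
by rewrite mulr_ge0 ?qprod_ge0 ?divr_ge0 ?mulr_ge0 ?subr1X_ge0 ?exprn_ge0 ?(ltW Q_gt0).
Qed.

Lemma comp_weight_ge0 l : 0 <= comp_weight l.
Proof. by rewrite mulr_ge0 ?exprn_ge0 ?tail_prod_ge0. Qed.

Let comp_weightE_ge0 l : (0 <= (comp_weight l)%:E)%E.
Proof. by rewrite lee_fin comp_weight_ge0. Qed.

Lemma esum_compositionsS b :
  \esum_(l in compositions b.+1) (comp_weight l)%:E
    = ((y * Q ^+ b.+1 / (1 - Q ^+ b.+1))%:E
       * \esum_(l in compositions_le b) (comp_weight l)%:E)%E.
Proof.
rewrite compositionsS esum_image; last by move=> l1 l2 _ _ [].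
rewrite -esumZl ?divr_ge0 ?mulr_ge0 ?exprn_ge0 ?subr1X_ge0 ?(ltW Q_gt0) //.
apply: eq_esum => l /andP[_ l_le]; rewrite -EFinM /comp_weight /= subnK; last lia.
by rewrite exprS; congr (_%:E); ring.
Qed.

Lemma esum_compositions_le b :
  \esum_(l in compositions_le b) (comp_weight l)%:E = (qprod b)%:E.
Proof.
elim: b => [|b IHb]; first by rewrite compositions_le0 esum_set1 // qprod0 /comp_weight mulr1.
rewrite (esumID (compositions_le b)) // compositions_leSI compositions_leSD.
rewrite esum_compositionsS IHb -EFinM -EFinD qprodS /qratio; congr EFin.
by have := subr1X_neq0 Q_gt0 Q_lt1 b; move=> ?; field.
Qed.

Lemma esum_compositions b :
  \esum_(l in compositions b) (comp_weight l)%:E = (comp_sum b)%:E.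
Proof.
case: b => [|b]; first by rewrite compositions0 esum_set1 // /comp_weight mulr1.
by rewrite esum_compositionsS esum_compositions_le -EFinM.
Qed.

Lemma esum_compositions2 a b c : 0 <= c ->
  \esum_(l in compositions a) \esum_(m in compositions b)
      (c * comp_weight l * comp_weight m)%:E
    = (c * comp_sum a * comp_sum b)%:E.
Proof.
move=> c_ge0.
have esumZ_weight d b' : 0 <= d ->
    \esum_(m in compositions b') (d * comp_weight m)%:E = (d * comp_sum b')%:E.
  move=> d_ge0; rewrite (eq_esum (b := fun m => (d%:E * (comp_weight m)%:E)%E)).
    by rewrite esumZl // esum_compositions.
  by move=> m _; rewrite EFinM.
transitivity (\esum_(l in compositions a) ((c * comp_sum b) * comp_weight l)%:E).
  apply: eq_esum => l _; rewrite esumZ_weight; last exact: mulr_ge0 (comp_weight_ge0 l).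
  by congr EFin; ring.
rewrite esumZ_weight; last exact: mulr_ge0 (comp_sum_ge0 b).
by congr EFin; ring.
Qed.

End CompositionSum.

Definition composition_pairs (ab : nat * nat) : set (seq nat * seq nat) :=
  compositions ab.1 `*`` (fun _ => compositions ab.2).

Definition pos_pairs : set (seq nat * seq nat) := [set p | all_pos p.1 && all_pos p.2].

Lemma snd_bij_pos_pairs : set_bij ([set: nat * nat] `*`` composition_pairs) pos_pairs snd.
Proof.
split.
- move=> [[a b] [l m]] [_ [/andP[l_pos _] /andP[m_pos _]]] /=.
  by rewrite /pos_pairs /= l_pos m_pos.
- move=> [[a b] [l m]] [[a' b'] [l' m']] /[!inE] /=.
  move=> [_ [/andP[_ /eqP la] /andP[_ /eqP mb]]] [_ [/andP[_ /eqP la'] /andP[_ /eqP mb']]].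
  by case=> el em; move: la mb la' mb' => /= <- <- <- <-; rewrite el em.
- move=> [l m] /andP[l_pos m_pos]; exists ((sumn l, sumn m), (l, m)) => //.
  by split => //; split; rewrite /compositions /= ?l_pos ?m_pos eqxx.
Qed.

Section ZAsPairSum.
Variables (R : realType) (Q z y : R).

Definition theta_term (n : int) : R := Q ^ ((n * (n + 1)) %/ 2)%Z * z ^ n.
Definition yfactor (s : nat) : R := (1 - y^-1) * Q ^+ s + y^-1.
Definition pair_weight (a b : nat) : R :=
  Q ^ ((a * b)%:Z - a%:Z - b%:Z) * yfactor (a + b) * comp_sum Q y a * comp_sum Q y b.

Lemma Zterm_factor l m : Q != 0 -> z != 0 ->
  Zterm Q z y (l, m) =
  theta_term ((sumn m)%:Z - (sumn l)%:Z)
    * Q ^ ((sumn l * sumn m)%:Z - (sumn l)%:Z - (sumn m)%:Z) * yfactor (sumn l + sumn m)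
    * comp_weight Q y l * comp_weight Q y m.
Proof.
move=> Q_neq0 z_neq0; set a := sumn l; set b := sumn m.
have expQ : Q ^ (-1 * a%:Z + 'C(a, 2)%:Z) * Q ^ (0 * b%:Z + 'C(b, 2)%:Z)
    = Q ^ (((b%:Z - a%:Z) * (b%:Z - a%:Z + 1)) %/ 2)%Z * Q ^ ((a * b)%:Z - a%:Z - b%:Z).
  by rewrite -!expfzDr // bin2_subz; congr (Q ^ _); ring.
have expz : z ^ signed false a * z ^ signed true b = z ^ (b%:Z - a%:Z).
  by rewrite -expfzDr // addrC.
transitivity (Q ^ (-1 * a%:Z + 'C(a, 2)%:Z) * Q ^ (0 * b%:Z + 'C(b, 2)%:Z)
    * (z ^ signed false a * z ^ signed true b) * yfactor (a + b)
    * comp_weight Q y l * comp_weight Q y m).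
  by rewrite /Zterm !side_prod_closed //= -/a -/b /yfactor /comp_weight !exprD; ring.
by rewrite expQ expz /theta_term; ring.
Qed.

Hypotheses (Q_gt0 : 0 < Q) (Q_lt1 : Q < 1) (z_gt0 : 0 < z) (y_gt0 : 0 < y).

Let comp_weight_ge0 := comp_weight_ge0 Q_gt0 Q_lt1 (ltW y_gt0).
Let esum_compositions2 := esum_compositions2 Q_gt0 Q_lt1 (ltW y_gt0).

Lemma theta_term_ge0 n : 0 <= theta_term n.
Proof. by rewrite mulr_ge0 // exprz_ge0 // ltW. Qed.

Lemma ycorr_ge0 s : 0 <= yfactor s.
Proof.
have -> : yfactor s = Q ^+ s + y^-1 * (1 - Q ^+ s) by rewrite /yfactor; ring.
by rewrite addr_ge0 ?mulr_ge0 ?exprn_ge0 ?subr1X_ge0 ?invr_ge0 ?ltW.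
Qed.

Lemma Zterm_ge0 p : 0 <= Zterm Q z y p.
Proof.
case: p => l m; rewrite Zterm_factor ?gt_eqF //.
apply/mulr_ge0/comp_weight_ge0/mulr_ge0/comp_weight_ge0/mulr_ge0/ycorr_ge0.
by rewrite mulr_ge0 ?theta_term_ge0 ?exprz_ge0 ?ltW.
Qed.

Lemma pair_weight_ge0 a b : 0 <= pair_weight a b.
Proof.
apply/mulr_ge0/(comp_sum_ge0 Q_gt0 Q_lt1 (ltW y_gt0)).
apply/mulr_ge0/(comp_sum_ge0 Q_gt0 Q_lt1 (ltW y_gt0)).
by rewrite mulr_ge0 ?ycorr_ge0 ?exprz_ge0 ?ltW.
Qed.

Let Zterm_ge0E p : (0 <= (Zterm Q z y p)%:E)%E.
Proof. by rewrite lee_fin Zterm_ge0. Qed.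

(* The pair ([::], [::]) supplies the constant term 1 of Z. *)
Lemma Zfun_pos_pairs : Zfun Q z y = \esum_(p in pos_pairs) (Zterm Q z y p)%:E.
Proof.
rewrite /Zfun (esumID [set ([::], [::])] pos_pairs) //.
have -> : pos_pairs `&` [set ([::], [::])] = [set ([::], [::])].
  by apply/seteqP; split => p /=; [case | move=> ->].
have -> : pos_pairs `&` ~` [set ([::], [::])] = Zindex.
  apply/seteqP; split => -[l m]; rewrite /pos_pairs /Zindex /all_pos /=.
    by case=> /andP[-> ->]; case: l m => [|x l] [|w m].
  by case/andP=> /andP[-> ->]; case: l m => [|x l] [|w m].
rewrite esum_set1 //; congr (_ + _)%E; congr EFin.
by rewrite /Zterm /side_prod /= !big_ord0 expr0 !mulr1 !mul1r addrNK.
Qed.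

Lemma esum_pos_pairs :
  \esum_(p in pos_pairs) (Zterm Q z y p)%:E =
  \esum_(ab in [set: nat * nat]) (theta_term (ab.2%:Z - ab.1%:Z) * pair_weight ab.1 ab.2)%:E.
Proof.
rewrite (reindex_esum _ _ _ _ snd_bij_pos_pairs).
rewrite -(esum_esum (a := fun _ p => (Zterm Q z y p)%:E)) //.
apply: eq_esum => -[a b] _ /=.
rewrite -(esum_esum (a := fun l m => (Zterm Q z y (l, m))%:E)) //=.
rewrite /pair_weight !mulrA -esum_compositions2; last first.
  by rewrite mulr_ge0 ?ycorr_ge0 // mulr_ge0 ?theta_term_ge0 ?exprz_ge0 ?ltW.
apply: eq_esum => l /andP[_ /eqP <-]; apply: eq_esum => m /andP[_ /eqP <-].
by rewrite Zterm_factor ?gt_eqF //; congr EFin; ring.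
Qed.

End ZAsPairSum.

Section DiagonalTelescoping.
Variables (R : realType) (Q y : R).
Hypotheses (Q_gt0 : 0 < Q) (Q_lt1 : Q < 1) (y_gt0 : 0 < y).

Let Q_neq0 : Q != 0. Proof. by rewrite gt_eqF. Qed.
Let y_neq0 : y != 0. Proof. by rewrite gt_eqF. Qed.

Lemma pair_weightC a b : pair_weight Q y a b = pair_weight Q y b a.
Proof. by rewrite /pair_weight mulnC addnC addrAC; ring. Qed.

Lemma pair_weight0n b : pair_weight Q y 0 b = qprod Q y b.
Proof.
rewrite /pair_weight /yfactor mul0n add0n mulr1 !sub0r /=.
case: b => [|b] /=; first by rewrite qprod0 oppr0 expr0z expr0; field.
rewrite qprodS /qratio -exprnN.
have := subr1X_neq0 Q_gt0 Q_lt1 b; have : Q ^+ b.+1 != 0 by rewrite expf_neq0.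
by move: (Q ^+ b.+1) => q q_neq0 q1_neq0; field; rewrite q_neq0 q1_neq0 y_neq0.
Qed.

Lemma pair_weightSS a b :
  pair_weight Q y a.+1 b.+1 =
  y * Q ^+ (a.+1 * b.+1) * qprod Q y a * qprod Q y b
    * (1 + (y - 1) * Q ^+ (a.+1 + b.+1)) / ((1 - Q ^+ a.+1) * (1 - Q ^+ b.+1)).
Proof.
have expE : Q ^ ((a.+1 * b.+1)%:Z - a.+1%:Z - b.+1%:Z) * (Q ^+ a.+1 * Q ^+ b.+1)
    = Q ^+ (a.+1 * b.+1).
  by rewrite !exprnP -!expfzDr //; congr (Q ^ _); lia.
have QaQb_neq0 : Q ^+ a.+1 * Q ^+ b.+1 != 0 by rewrite mulf_neq0 ?expf_neq0.
rewrite /pair_weight /yfactor /= (canRL (mulfK QaQb_neq0) expE) exprD.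
have := subr1X_neq0 Q_gt0 Q_lt1 a; have := subr1X_neq0 Q_gt0 Q_lt1 b.
have := expf_neq0 a.+1 Q_neq0; have := expf_neq0 b.+1 Q_neq0.
move: (Q ^+ a.+1) (Q ^+ b.+1) => qa qb qb_neq0 qa_neq0 qb1_neq0 qa1_neq0.
by field; rewrite qa_neq0 qb_neq0 qa1_neq0 qb1_neq0 y_neq0.
Qed.

Definition diag_corr (k n : nat) : R :=
  if k is k'.+1 then
    y * Q ^+ (k * (k + n)) * qprod Q y k' * qprod Q y (k' + n) / (1 - Q ^+ (k + n))
  else 0.

(* Summed over k the corrections cancel, as diag_corr 0 n = 0, so the
   diagonal sums of pair_weight do not depend on n. *)
Lemma pair_weight_telescope k n :
  pair_weight Q y k (k + n) + diag_corr k.+1 n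
    = pair_weight Q y k (k + n.+1) + diag_corr k n.
Proof.
case: k => [|k].
  rewrite !add0n !pair_weight0n /diag_corr /= mul1n add0n add1n qprod0 mulr1 addr0.
  rewrite qprodS /qratio.
  by have := subr1X_neq0 Q_gt0 Q_lt1 n; move: (Q ^+ n.+1) => q q1_neq0; field.
rewrite /diag_corr !addSn !addnS !pair_weightSS !qprodS /qratio.
have expSS : Q ^+ (k.+2 * (k + n).+2)
    = Q ^+ (k.+1 * (k + n).+1) * Q ^+ k.+1 * Q ^+ (k + n).+1 * Q.
  by rewrite -!exprD -exprSr; congr (_ ^+ _); ring.
have expS : Q ^+ (k.+1 * (k + n).+2) = Q ^+ (k.+1 * (k + n).+1) * Q ^+ k.+1.
  by rewrite -exprD; congr (_ ^+ _); ring.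
rewrite expSS expS (exprD Q k.+1 (k + n).+1) (exprD Q k.+1 (k + n).+2).
rewrite (exprSr Q (k + n).+1).
have := subr1X_neq0 Q_gt0 Q_lt1 k; have := subr1X_neq0 Q_gt0 Q_lt1 (k + n).
have := subr1X_neq0 Q_gt0 Q_lt1 (k + n).+1; rewrite (exprSr Q (k + n).+1).
move: (Q ^+ (k.+1 * _)) (Q ^+ k.+1) (Q ^+ (k + n).+1) => X a u uQ1_neq0 u1_neq0 a1_neq0.
by field; rewrite uQ1_neq0 u1_neq0 a1_neq0.
Qed.

End DiagonalTelescoping.

Lemma nneseries_le_geometric (R : realType) (q c : R) (f : nat -> R) :
  0 < q -> q < 1 -> 0 <= c -> (forall k, 0 <= f k <= c * q ^+ k) ->
  (\sum_(k <oo) (f k)%:E <= (c / (1 - q))%:E)%E.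
Proof.
move=> q_gt0 q_lt1 c_ge0 f_bounds; apply: lime_le.
  by apply: is_cvg_nneseries => k _ _; rewrite lee_fin (andP (f_bounds k)).1.
apply: nearW => N; rewrite /= sumEFin lee_fin.
apply: le_trans (geometric_le_lim N c_ge0 q_gt0 _); last by rewrite ger0_norm ?ltW.
by rewrite seriesEnat /=; apply: ler_sum => k _; rewrite (andP (f_bounds k)).2.
Qed.

Section Bounds.
Variables (R : realType) (Q y : R).
Hypotheses (Q_gt0 : 0 < Q) (Q_lt1 : Q < 1) (y_gt0 : 0 < y) (y_le1 : y <= 1).

Let Q_ge0 : 0 <= Q. Proof. exact: ltW. Qed.
Let y_ge0 : 0 <= y. Proof. exact: ltW. Qed.
Let subr1Q_ge0 : 0 <= 1 - Q. Proof. by rewrite subr_ge0 ltW. Qed.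
Let qprod_ge0 := qprod_ge0 Q_gt0 Q_lt1 (ltW y_gt0).
Let qratio_num_ge0 := qratio_num_ge0 Q_gt0 Q_lt1 (ltW y_gt0).

Lemma exprX_le m p : (p <= m)%N -> Q ^+ m <= Q ^+ p.
Proof. by apply: ler_wiXn2l; rewrite // ltW. Qed.

Lemma inv_subr1X_le p : (1 - Q ^+ p.+1)^-1 <= (1 - Q)^-1.
Proof.
rewrite lef_pV2 ?posrE ?subr1X_gt0 ?subr_gt0 //.
by rewrite lerB // -[X in _ <= X]expr1 exprX_le.
Qed.

Lemma qratio_num_le1 s : 1 + (y - 1) * Q ^+ s <= 1.
Proof. by rewrite gerDl mulr_le0_ge0 ?exprn_ge0 // subr_le0. Qed.

Lemma qratio_le p : qratio Q y p.+1 <= 1 + Q ^+ p.+1 / (1 - Q).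
Proof.
apply: (@le_trans _ _ (1 - Q ^+ p.+1)^-1).
  by rewrite -[X in _ <= X]mul1r ler_wpM2r ?invr_ge0 ?subr1X_ge0 ?qratio_num_le1.
have -> : (1 - Q ^+ p.+1)^-1 = 1 + Q ^+ p.+1 * (1 - Q ^+ p.+1)^-1.
  by have := subr1X_neq0 Q_gt0 Q_lt1 p; move=> ?; field.
by rewrite lerD2l ler_wpM2l ?exprn_ge0 ?inv_subr1X_le.
Qed.

Definition qprod_bound : R := expR (Q / (1 - Q) / (1 - Q)).

Lemma qprod_le n : qprod Q y n <= qprod_bound.
Proof.
rewrite /qprod big_add1 /=.
apply: (@le_trans _ _ (\prod_(0 <= i < n) expR (Q / (1 - Q) * Q ^+ i))).
  apply: ler_prod => i _; rewrite qratio_ge0 ?y_ge0 //=.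
  apply: le_trans (qratio_le i) _; rewrite exprS mulrAC.
  exact: expR_ge1Dx.
rewrite -expR_sum ler_expR -[X in X <= _]/(series (geometric (Q / (1 - Q)) Q) n).
apply: geometric_le_lim => //; first by rewrite !divr_ge0 // ltW.
by rewrite ger0_norm.
Qed.

Lemma qprod_bound_ge0 : 0 <= qprod_bound.
Proof. exact: expR_ge0. Qed.

Lemma diag_corr_le k n :
  diag_corr Q y k n <= qprod_bound ^+ 2 / (1 - Q) * Q ^+ k.
Proof.
case: k => [|k] /=.
  by rewrite !mulr_ge0 ?invr_ge0 ?exprn_ge0 ?qprod_bound_ge0 ?Q_ge0 ?subr1Q_ge0.
have -> : qprod_bound ^+ 2 / (1 - Q) * Q ^+ k.+1
    = 1 * Q ^+ k.+1 * qprod_bound * qprod_bound * (1 - Q)^-1 by ring.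
apply: ler_pM; rewrite ?invr_ge0 ?subr1X_ge0 ?addSn ?inv_subr1X_le //.
  by rewrite !mulr_ge0 ?exprn_ge0 ?qprod_ge0 ?Q_ge0.
apply: ler_pM; rewrite ?qprod_ge0 ?qprod_le //.
  by rewrite !mulr_ge0 ?exprn_ge0 ?qprod_ge0 ?Q_ge0.
apply: ler_pM; rewrite ?qprod_ge0 ?qprod_le //; first by rewrite !mulr_ge0 ?exprn_ge0 ?Q_ge0.
by apply: ler_pM; rewrite ?exprn_ge0 ?Q_ge0 ?y_ge0 // exprX_le // mulSn; lia.
Qed.

Lemma pair_weight_diag_le k n :
  pair_weight Q y k.+1 (k.+1 + n)
    <= qprod_bound ^+ 2 / (1 - Q) ^+ 2 * Q ^+ n * Q ^+ k.
Proof.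
rewrite addSn pair_weightSS // invfM.
have -> : qprod_bound ^+ 2 / (1 - Q) ^+ 2 * Q ^+ n * Q ^+ k
    = 1 * Q ^+ (n + k) * qprod_bound * qprod_bound * 1 * ((1 - Q)^-1 * (1 - Q)^-1).
  by rewrite exprD -exprVn; ring.
have [D1_ge0 D2_ge0] := (subr1X_ge0 Q_gt0 Q_lt1 k.+1, subr1X_ge0 Q_gt0 Q_lt1 (k + n).+1).
apply: ler_pM; rewrite ?mulr_ge0 ?invr_ge0 ?qratio_num_ge0 ?exprn_ge0 ?qprod_ge0 ?Q_ge0 //;
  last by apply: ler_pM; rewrite ?invr_ge0 ?inv_subr1X_le.
apply: ler_pM;
  rewrite ?qratio_num_ge0 ?qratio_num_le1 ?mulr_ge0 ?exprn_ge0 ?qprod_ge0 ?Q_ge0 //.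
apply: ler_pM; rewrite ?qprod_le ?mulr_ge0 ?exprn_ge0 ?qprod_ge0 ?Q_ge0 //.
apply: ler_pM; rewrite ?qprod_le ?mulr_ge0 ?exprn_ge0 ?qprod_ge0 ?Q_ge0 //.
by apply: ler_pM; rewrite ?exprn_ge0 ?Q_ge0 // exprX_le // mulSn; lia.
Qed.

End Bounds.

Section DiagonalSeries.
Variables (R : realType) (Q y : R).
Hypotheses (Q_gt0 : 0 < Q) (Q_lt1 : Q < 1) (y_gt0 : 0 < y) (y_le1 : y <= 1).

Definition diag_series (n : nat) : \bar R := \sum_(k <oo) (pair_weight Q y k (k + n))%:E.

Let B := qprod_bound Q.
Let B_ge0 : 0 <= B. Proof. exact: qprod_bound_ge0. Qed.
Let subr1Q_ge0 : 0 <= 1 - Q. Proof. by rewrite subr_ge0 ltW. Qed.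
Let pair_weightE_ge0 a b : (0 <= (pair_weight Q y a b)%:E)%E.
Proof. by rewrite lee_fin pair_weight_ge0. Qed.

Let diag_corr_ge0 k n : 0 <= diag_corr Q y k n.
Proof.
case: k => [|k] //=; rewrite divr_ge0 ?subr1X_ge0 // !mulr_ge0 ?exprn_ge0 ?qprod_ge0 ?ltW //.
Qed.

Lemma diag_corr_series_le n :
  (\sum_(k <oo) (diag_corr Q y k n)%:E <= (B ^+ 2 / (1 - Q) / (1 - Q))%:E)%E.
Proof.
apply: nneseries_le_geometric; rewrite ?divr_ge0 ?exprn_ge0 // => k.
by rewrite diag_corr_ge0 diag_corr_le.
Qed.

Lemma diag_seriesS n : diag_series n.+1 = diag_series n.
Proof.
have corr_ge0 k : (0 <= (diag_corr Q y k n)%:E)%E by rewrite lee_fin.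
have telescoped : (\sum_(k <oo) ((pair_weight Q y k (k + n))%:E + (diag_corr Q y k.+1 n)%:E)
    = \sum_(k <oo) ((pair_weight Q y k (k + n.+1))%:E + (diag_corr Q y k n)%:E))%E.
  by apply: eq_eseriesr => k _; rewrite -!EFinD pair_weight_telescope.
have corr_shift : (\sum_(k <oo) (diag_corr Q y k.+1 n)%:E
    = \sum_(k <oo) (diag_corr Q y k n)%:E)%E.
  rewrite [RHS]nneseries_recl //= add0e.
  rewrite -(@nneseries_addn R (fun k => (diag_corr Q y k n)%:E) 1) //.
  by apply: eq_eseriesr => k _; rewrite addn1.
have corr_fin : (\sum_(k <oo) (diag_corr Q y k n)%:E)%E \is a fin_num.
  rewrite ge0_fin_numE; last exact: nneseries_ge0.
  exact: le_lt_trans (diag_corr_series_le n) (ltry _).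
rewrite !nneseriesD // corr_shift in telescoped.
by rewrite /diag_series -[LHS](addeK _ corr_fin) -telescoped addeK.
Qed.

Lemma diag_series_const n : diag_series n = diag_series 0.
Proof. by elim: n => [|n IHn] //; rewrite diag_seriesS. Qed.

Lemma diag_series_split n :
  diag_series n = ((qprod Q y n)%:E + \sum_(k <oo) (pair_weight Q y k.+1 (k.+1 + n))%:E)%E.
Proof.
rewrite /diag_series nneseries_recl //= add0n pair_weight0n //.
congr (_ + _)%E; rewrite -(@nneseries_addn R (fun k => (pair_weight Q y k (k + n))%:E) 1) //.
by apply: eq_eseriesr => k _; rewrite addn1.
Qed.

Lemma qprod_le_diag_series n : ((qprod Q y n)%:E <= diag_series n)%E.
Proof. by rewrite diag_series_split leeDl // nneseries_ge0. Qed.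

Lemma diag_series_le n :
  (diag_series n <= (qprod Q y n + B ^+ 2 / (1 - Q) ^+ 2 * Q ^+ n / (1 - Q))%:E)%E.
Proof.
rewrite diag_series_split EFinD leeD2l //.
apply: nneseries_le_geometric; rewrite ?mulr_ge0 ?invr_ge0 ?exprn_ge0 ?(ltW Q_gt0) // => k.
by rewrite pair_weight_ge0 ?pair_weight_diag_le.
Qed.

Definition diag_total : R := fine (diag_series 0).

Lemma diag_seriesE n : diag_series n = diag_total%:E.
Proof.
rewrite diag_series_const /diag_total fineK // ge0_fin_numE; last exact: nneseries_ge0.
exact: le_lt_trans (diag_series_le 0) (ltry _).
Qed.

Lemma diag_total_ge1 : 1 <= diag_total.
Proof. by rewrite -lee_fin -(diag_seriesE 0) -(qprod0 Q y) qprod_le_diag_series. Qed.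

Lemma cvg_qprod : qprod Q y @ \oo --> diag_total.
Proof.
pose c := B ^+ 2 / (1 - Q) ^+ 2 / (1 - Q).
apply: (@squeeze_cvgr _ _ _ _ (fun n => diag_total - geometric c Q n) (cst diag_total)).
- apply: nearW => n; apply/andP; split.
    have := diag_series_le n; rewrite diag_seriesE lee_fin => total_le.
    by rewrite lerBlDr (le_trans total_le) // lerD2l /geometric /= /c mulrAC.
  by have := qprod_le_diag_series n; rewrite diag_seriesE lee_fin.
- rewrite -[X in _ --> X]subr0; apply: cvgB; first exact: cvg_cst.
  by apply: cvg_geometric; rewrite ger0_norm // ltW.
- exact: cvg_cst.
Qed.

End DiagonalSeries.

(* The pair (a, b) with b - a = n and min a b = k. *)
Definition pair_of (p : int * nat) : nat * nat :=
  match p.1 with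
  | Posz m => (p.2, p.2 + m)%N
  | Negz j => ((p.2 + j.+1)%N, p.2)
  end.

Lemma pair_of_bij : set_bij [set: int * nat] [set: nat * nat] pair_of.
Proof.
split => //.
- move=> [[m|j] k] [[m'|j'] k'] _ _; rewrite /pair_of /= => -[k_eq m_eq];
    first [lia | by congr (Posz _, _); lia | by congr (Negz _, _); lia].
- move=> [a b] _; case: (leqP a b) => [a_le_b | b_lt_a].
    by exists (Posz (b - a), a) => //; rewrite /pair_of /= subnKC.
  by exists (Negz (a - b).-1, b) => //; rewrite /pair_of /=; congr (_, _); lia.
Qed.

Lemma pair_of_diff n k : (pair_of (n, k)).2%:Z - (pair_of (n, k)).1%:Z = n.
Proof. by case: n => [m|j]; rewrite /pair_of /= PoszD ?NegzE; ring. Qed.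

Lemma pair_weight_pair_of (R : realType) (Q y : R) n k :
  pair_weight Q y (pair_of (n, k)).1 (pair_of (n, k)).2 = pair_weight Q y k (k + `|n|%N).
Proof. by case: n => [m|j] //=; rewrite pair_weightC. Qed.

Lemma prod_partialE (R : realType) (Q y : R) n : prod_partial Q y n = (qprod Q y n)^-1.
Proof.
by rewrite /prod_partial /qprod -prodfV; apply: eq_bigr => i _; rewrite /qratio invf_div.
Qed.

Lemma Zfun_theta_lhs (R : realType) (Q z y : R) :
  0 < Q -> Q < 1 -> 0 < z -> 0 < y -> y <= 1 ->
  Zfun Q z y = ((diag_total Q y)%:E * theta_lhs Q z)%E.
Proof.
move=> Q_gt0 Q_lt1 z_gt0 y_gt0 y_le1.
have term_ge0 n k : (0 <= (theta_term Q z n * pair_weight Q y k (k + `|n|%N))%:E)%E.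
  by rewrite lee_fin mulr_ge0 ?theta_term_ge0 ?pair_weight_ge0.
rewrite Zfun_pos_pairs // esum_pos_pairs // (reindex_esum _ _ _ _ pair_of_bij).
have -> : [set: int * nat] = [set: int] `*`` (fun _ => [set: nat]) by apply/seteqP; split.
rewrite -(esum_esum (a := fun n k =>
    (theta_term Q z ((pair_of (n, k)).2%:Z - (pair_of (n, k)).1%:Z)
     * pair_weight Q y (pair_of (n, k)).1 (pair_of (n, k)).2)%:E)); last first.
  by move=> n k _ _; rewrite pair_of_diff pair_weight_pair_of.
rewrite /theta_lhs -esumZl; last 2 first.
- exact: le_trans ler01 (diag_total_ge1 _ _ _ _).
- by move=> n; rewrite lee_fin theta_term_ge0.
apply: eq_esum => n _.
rewrite (eq_esum (b := fun k =>
    ((theta_term Q z n)%:E * (pair_weight Q y k (k + `|n|%N))%:E)%E)); last first.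
  by move=> k _; rewrite pair_of_diff pair_weight_pair_of EFinM.
rewrite esumZl ?theta_term_ge0 //; last by move=> k; rewrite lee_fin pair_weight_ge0.
rewrite -nneseries_esumT; last by move=> k; rewrite lee_fin pair_weight_ge0.
by rewrite -/(diag_series Q y `|n|) diag_seriesE // -EFinM mulrC.
Qed.

Unset Implicit Arguments. Set Strict Implicit.

Theorem theorem1p1 (R : realType) (Q z y : R) :
  0 < Q -> Q < 1 -> 0 < z -> 0 < y -> y <= 1 ->
  exists P : R, prod_partial Q y @ \oo --> P /\
    theta_lhs Q z = (Zfun Q z y * P%:E)%E.
Proof.
move=> Q_gt0 Q_lt1 z_gt0 y_gt0 y_le1.
have T_neq0 : diag_total Q y != 0.
  by rewrite gt_eqF // (lt_le_trans ltr01 (diag_total_ge1 _ _ _ _)).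
exists (diag_total Q y)^-1; split.
  rewrite (funext (prod_partialE Q y)).
  exact: cvgV T_neq0 (cvg_qprod Q_gt0 Q_lt1 y_gt0 y_le1).
by rewrite Zfun_theta_lhs // muleC muleA -EFinM mulVf // mul1e.
Qed.
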